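(* Let $d^{gen}_{GH}$ be any one of $d_{GH},d^{us}_{GH},d^{ls}_{GH},d^{rc}_{GH}$, and let $X,Y$ be nonempty metric spaces. Then: (1) $2d^{gen}_{GH}(\Delta_1,X)=\operatorname{diam}X$; (2) $2d^{gen}_{GH}(X,Y)\le\max\{\operatorname{diam}X,\operatorname{diam}Y\}$; (3) if $\operatorname{diam}X<\infty$ or $\operatorname{diam}Y<\infty$, then $|\operatorname{diam}X-\operatorname{diam}Y|\le 2d^{gen}_{GH}(X,Y)$; (4) if $\operatorname{diam}X<\infty$, then for all $\lambda,\mu\ge0$, $2d^{gen}_{GH}(\lambda X,\mu X)=|\lambda-\mu|\operatorname{diam}X$; (5) for every $\lambda>0$, $d^{gen}_{GH}(\lambda X,\lambda Y)=\lambda\, d^{gen}_{GH}(X,Y)$, and if $X,Y$ are bounded this also holds for $\lambda=0$; (6) if $X$ and $Y$ are discrete metric spaces, then $d^{gen}_{GH}(X,Y)=d_{GH}(X,Y)$; (7) if a sequence of metric spaces $X_n$ satisfies $d^{gen}_{GH}(X_n,X)\to0$, then $d_{GH}(X_n,X)\to0$.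
   Context: For a metric space, $|xy|$ denotes distance, $\operatorname{diam}X=\sup\{|xy|:x,y\in X\}$, $\Delta_1$ is the one-point metric space, $\lambda X$ for $\lambda>0$ is $X$ with all distances multiplied by $\lambda$, and $0X=\Delta_1$ for bounded $X$. A set-valued map $f:X\rightrightarrows Y$ assigns to each $x\in X$ a nonempty $f(x)\subseteq Y$ and is identified with its graph. A correspondence between $X$ and $Y$ is a subset $R\subseteq X\times Y$ whose projections to $X$ and to $Y$ are both surjective, regarded as the set-valued map $x\mapsto R(x)=\{y:(x,y)\in R\}$; $R^{-1}=\{(y,x):(x,y)\in R\}$; $\mathcal R(X,Y)$ is the set of all correspondences. The distortion of a nonempty $\sigma\subseteq X\times Y$ is $\operatorname{dis}\sigma=\sup\{||xx'|-|yy'||:(x,y),(x',y')\in\sigma\}\in[0,\infty]$. A set-valued map $f$ between topological spaces is upper semicontinuous if for every $x$ and every open $U\supseteq f(x)$ there is a neighborhood $V$ of $x$ with $f(x')\subseteq U$ for all $x'\in V$; lower semicontinuous if for every $x$ and every open $U$ with $f(x)\cap U\ne\emptyset$ there is a neighborhood $V$ of $x$ with $f(x')\cap U\neq\emptyset$ for all $x'\in V$; continuous if both. $\mathcal R_{us}(X,Y)$ (resp. $\mathcal R_{ls}(X,Y)$, $\mathcal R_{rc}(X,Y)$) is the set of $R\in\mathcal R(X,Y)$ such that both $R$ and $R^{-1}$ are upper semicontinuous (resp. lower semicontinuous, continuous). Then $d_{GH}(X,Y)=\frac12\inf\{\operatorname{dis}R:R\in\mathcal R(X,Y)\}$, and $d^{us}_{GH},d^{ls}_{GH},d^{rc}_{GH}$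 are defined by the same formula with $\mathcal R$ replaced by $\mathcal R_{us},\mathcal R_{ls},\mathcal R_{rc}$ respectively. *)

From Stdlib Require Import Reals Lra.
From Coquelicot Require Import Coquelicot.
Open Scope R_scope.

Record MetricSpace := {
  carrier :> Type;
  dist : carrier -> carrier -> R;
  dist_refl : forall x, dist x x = 0;
  dist_sep : forall x y, dist x y = 0 -> x = y;
  dist_sym : forall x y, dist x y = dist y x;
  dist_tri : forall x y z, dist x z <= dist x y + dist y z
}.

Arguments dist {m} _ _.

Definition nonempty (X : MetricSpace) : Prop := exists x : X, True.

Definition diam (X : MetricSpace) : Rbar :=
  Lub_Rbar (fun r => exists x y : X, r = dist x y).

Definition Delta1 : MetricSpace.
Proof.
  refine {| carrier := unit; dist := fun _ _ => 0 |}.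
  - reflexivity.
  - intros [] [] _; reflexivity.
  - reflexivity.
  - intros; lra.
Defined.

Definition scale_pos (l : R) (hl : 0 < l) (X : MetricSpace) : MetricSpace.
Proof.
  refine {| carrier := carrier X; dist := fun x y => l * dist x y |}.
  - intros x; rewrite dist_refl; ring.
  - intros x y h. apply dist_sep.
    destruct (Rmult_integral _ _ h) as [h'|h']; [lra|exact h'].
  - intros x y; rewrite dist_sym; reflexivity.
  - intros x y z. pose proof (dist_tri X x y z). nra.
Defined.

(** lambda X : equals the rescaled space for lambda > 0, and Delta_1 for
    lambda <= 0 (only used for lambda = 0, i.e. 0X = Delta_1, and only for
    bounded X, as in the paper). *)
Definition scale (l : R) (X : MetricSpace) : MetricSpace :=
  match Rlt_dec 0 l with
  | left h => scale_pos l h X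
  | right _ => Delta1
  end.

Definition is_open {X : MetricSpace} (U : X -> Prop) : Prop :=
  forall x, U x -> exists eps, 0 < eps /\ forall y, dist x y < eps -> U y.

(** Set-valued maps / relations, identified with their graphs:
    f : A -> B -> Prop, f x y means y in f(x). *)
Definition upper_semicont {A B : MetricSpace} (f : A -> B -> Prop) : Prop :=
  forall (x : A) (U : B -> Prop), is_open U -> (forall y, f x y -> U y) ->
    exists V : A -> Prop, is_open V /\ V x /\
      forall x', V x' -> forall y, f x' y -> U y.

Definition lower_semicont {A B : MetricSpace} (f : A -> B -> Prop) : Prop :=
  forall (x : A) (U : B -> Prop), is_open U -> (exists y, f x y /\ U y) ->
    exists V : A -> Prop, is_open V /\ V x /\
      forall x', V x' -> exists y, f x' y /\ U y.

Definition continuous_svm {A B : MetricSpace} (f : A -> B -> Prop) : Prop :=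
  upper_semicont f /\ lower_semicont f.

Definition rel_inv {A B : Type} (R : A -> B -> Prop) : B -> A -> Prop :=
  fun y x => R x y.

Definition is_corr {X Y : MetricSpace} (R : X -> Y -> Prop) : Prop :=
  (forall x, exists y, R x y) /\ (forall y, exists x, R x y).

Definition dis {X Y : MetricSpace} (R : X -> Y -> Prop) : Rbar :=
  Lub_Rbar (fun r => exists x x' y y', R x y /\ R x' y' /\
                       r = Rabs (dist x x' - dist y y')).

Inductive gh_kind := GH_all | GH_us | GH_ls | GH_rc.

Definition admissible (k : gh_kind) {X Y : MetricSpace} (R : X -> Y -> Prop) : Prop :=
  is_corr R /\
  match k with
  | GH_all => True
  | GH_us => upper_semicont R /\ upper_semicont (rel_inv R)
  | GH_ls => lower_semicont R /\ lower_semicont (rel_inv R)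
  | GH_rc => continuous_svm R /\ continuous_svm (rel_inv R)
  end.

(** d^k_GH(X,Y) = 1/2 inf { dis R : R admissible } in [0,+oo]
    (inf of the empty set = +oo; correspondences with infinite distortion do
    not affect the infimum). *)
Definition dGH (k : gh_kind) (X Y : MetricSpace) : Rbar :=
  Rbar_mult (/ 2) (Glb_Rbar (fun r => exists R : X -> Y -> Prop,
                                 admissible k R /\ dis R = Finite r)).

Definition discrete (X : MetricSpace) : Prop :=
  forall x : X, exists eps, 0 < eps /\ forall y : X, dist x y < eps -> y = x.

Definition Rbar_to0 (u : nat -> Rbar) : Prop :=
  forall eps, 0 < eps -> exists N, forall n, (N <= n)%nat -> Rbar_lt (u n) (Finite eps).

Definition Rbar_max (a b : Rbar) : Rbar :=
  match Rbar_le_dec a b with left _ => b | right _ => a end.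

(** All seven statements are elementary bounds on the infimum of distortions.
    The total correspondence [X * Y] is admissible for every kind of distance
    and has distortion at most [max (diam X) (diam Y)]; conversely any
    correspondence with distortion [r] gives [diam X <= diam Y + r] and vice
    versa.  With [Y = Delta_1] these two bounds meet.  Rescaling both spaces by
    [l > 0] leaves the topology, hence admissibility, unchanged and multiplies
    every distortion by [l]; the identity of [X] is an admissible
    correspondence between [l X] and [m X] of distortion [|l - m| diam X].  On
    discrete spaces every set-valued map is continuous, so all four distances
    agree, and each of them dominates [d_GH]. *)

From Pilot Require Import Defs.
From Stdlib Require Import Reals Lra.
From Coquelicot Require Import Coquelicot.
Open Scope R_scope.

Lemma Rbar_mult_posE (c : R) (hc : 0 < c) (x : Rbar) :
  Rbar_mult c x = Rbar_mult_pos x (mkposreal c hc).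
Proof.
  destruct x as [x| |]; simpl; [f_equal; ring| |];
    unfold Rbar_mult'; destruct (Rle_dec 0 c) as [h|]; try lra;
    destruct (Rle_lt_or_eq_dec 0 c h); try lra; reflexivity.
Qed.

Lemma Rbar_mult_2_half (x : Rbar) : Rbar_mult 2 (Rbar_mult (/ 2) x) = x.
Proof.
  assert (h2 : 0 < 2) by lra. assert (hhalf : 0 < / 2) by lra.
  rewrite (Rbar_mult_posE _ hhalf), (Rbar_mult_posE _ h2).
  destruct x; simpl; trivial. f_equal. field.
Qed.

Lemma Rbar_mult_pos_div_pos (x : Rbar) (c : posreal) :
  Rbar_mult_pos (Rbar_div_pos x c) c = x.
Proof. destruct x; simpl; trivial. f_equal. field. apply Rgt_not_eq, cond_pos. Qed.

Lemma Rbar_le_max_l (a b : Rbar) : Rbar_le a (Rbar_max a b).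
Proof.
  unfold Rbar_max. destruct (Rbar_le_dec a b); [assumption | apply Rbar_le_refl].
Qed.

Lemma Rbar_le_max_r (a b : Rbar) : Rbar_le b (Rbar_max a b).
Proof.
  unfold Rbar_max. destruct (Rbar_le_dec a b) as [|h];
    [apply Rbar_le_refl | apply Rbar_lt_le, Rbar_not_le_lt, h].
Qed.

Lemma is_lub_Rbar_scal (E : R -> Prop) (l : Rbar) (c : posreal) :
  is_lub_Rbar E l ->
  is_lub_Rbar (fun r => exists s, E s /\ r = s * c) (Rbar_mult_pos l c).
Proof.
  intros [ub least]. split.
  - intros r [s [Es ->]]. apply (Rbar_mult_pos_le s l c), ub, Es.
  - intros b ubb. rewrite <- (Rbar_mult_pos_div_pos b c).
    apply Rbar_mult_pos_le, least. intros s Es.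
    apply (Rbar_mult_pos_le _ _ c). rewrite Rbar_mult_pos_div_pos.
    apply ubb. eauto.
Qed.

Lemma is_glb_Rbar_scal (E : R -> Prop) (l : Rbar) (c : posreal) :
  is_glb_Rbar E l ->
  is_glb_Rbar (fun r => exists s, E s /\ r = s * c) (Rbar_mult_pos l c).
Proof.
  intros [lb greatest]. split.
  - intros r [s [Es ->]]. apply (Rbar_mult_pos_le l s c), lb, Es.
  - intros b lbb. rewrite <- (Rbar_mult_pos_div_pos b c).
    apply Rbar_mult_pos_le, greatest. intros s Es.
    apply (Rbar_mult_pos_le _ _ c). rewrite Rbar_mult_pos_div_pos.
    apply lbb. eauto.
Qed.

Section MetricFacts.

Variable X : MetricSpace.

Lemma dist_ge_0 (x y : X) : 0 <= Defs.dist x y.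
Proof.
  pose proof (Defs.dist_tri X x y x). rewrite Defs.dist_refl, (Defs.dist_sym X y x) in H. lra.
Qed.

Lemma diam_ge_dist (x y : X) : Rbar_le (Defs.dist x y) (diam X).
Proof. apply (proj1 (Lub_Rbar_correct _)). eauto. Qed.

Lemma diam_le (b : Rbar) :
  (forall x y : X, Rbar_le (Defs.dist x y) b) -> Rbar_le (diam X) b.
Proof. intros H. apply (proj2 (Lub_Rbar_correct _)). intros r [x [y ->]]. apply H. Qed.

Lemma diam_ge_0 : nonempty X -> Rbar_le 0 (diam X).
Proof. intros [x _]. rewrite <- (Defs.dist_refl X x). apply diam_ge_dist. Qed.

End MetricFacts.

Lemma diam_Delta1 : diam Delta1 = Finite 0.
Proof.
  apply Rbar_le_antisym; [apply diam_le; intros; apply Rbar_le_refl|].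
  apply diam_ge_0. exists tt. trivial.
Qed.

Section Distortion.

Variables X Y : MetricSpace.
Implicit Type C : X -> Y -> Prop.

Lemma dis_ge C x x' y y' : C x y -> C x' y' ->
  Rbar_le (Rabs (Defs.dist x x' - Defs.dist y y')) (dis C).
Proof. intros H H'. apply (proj1 (Lub_Rbar_correct _)). exists x, x', y, y'. auto. Qed.

Lemma dis_le C (b : Rbar) :
  (forall x x' y y', C x y -> C x' y' ->
     Rbar_le (Rabs (Defs.dist x x' - Defs.dist y y')) b) ->
  Rbar_le (dis C) b.
Proof.
  intros H. apply (proj2 (Lub_Rbar_correct _)). intros r (x & x' & y & y' & H1 & H2 & ->).
  auto.
Qed.

Lemma dis_ge_0 C : is_corr C -> nonempty X -> Rbar_le 0 (dis C).
Proof.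
  intros [HX _] [x _]. destruct (HX x) as [y Hy].
  replace (Finite 0) with (Finite (Rabs (Defs.dist x x - Defs.dist y y)))
    by (rewrite !Defs.dist_refl, Rminus_0_r, Rabs_R0; reflexivity).
  now apply dis_ge.
Qed.

Lemma dis_rel_inv C : dis (rel_inv C) = dis C.
Proof.
  apply Lub_Rbar_eqset. intros r. split; intros (a & a' & b & b' & H1 & H2 & ->);
    exists b, b', a, a'; repeat split; auto; apply Rabs_minus_sym.
Qed.

Lemma is_corr_rel_inv C : is_corr C -> is_corr (rel_inv C).
Proof. intros [H1 H2]. split; assumption. Qed.

Lemma admissible_rel_inv k C : admissible k C -> admissible k (rel_inv C).
Proof.
  intros [Hc Hk]. split; [now apply is_corr_rel_inv|].
  destruct k; simpl in *; tauto.
Qed.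

Lemma admissible_of_continuous k C :
  is_corr C -> continuous_svm C -> continuous_svm (rel_inv C) -> admissible k C.
Proof. intros. split; [assumption|]. destruct k; unfold continuous_svm in *; tauto. Qed.

Lemma diam_le_diam_plus_dis C (r : R) :
  is_corr C -> dis C = Finite r -> Rbar_le (diam X) (Rbar_plus (diam Y) r).
Proof.
  intros [HX _] Hr. apply diam_le. intros x x'.
  destruct (HX x) as [y Hy], (HX x') as [y' Hy'].
  pose proof (dis_ge C x x' y y' Hy Hy') as H. rewrite Hr in H.
  apply Rbar_le_trans with (Finite (Defs.dist y y' + r)).
  - simpl in H |- *. apply Rabs_le_between in H. lra.
  - apply (Rbar_plus_le_compat (Finite _) _ (Finite r) (Finite r));
      [apply diam_ge_dist | apply Rbar_le_refl].
Qed.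

End Distortion.

Lemma continuous_svm_total (A B : MetricSpace) :
  continuous_svm (fun (_ : A) (_ : B) => True).
Proof.
  assert (open_full : is_open (fun _ : A => True))
    by (intros x _; exists 1; split; [lra | auto]).
  split.
  - intros x U _ HU. exists (fun _ => True). auto.
  - intros x U _ [y [_ Uy]]. exists (fun _ => True). eauto.
Qed.

Lemma continuous_svm_discrete (A B : MetricSpace) (F : A -> B -> Prop) :
  discrete A -> continuous_svm F.
Proof.
  intros HA.
  assert (open_point : forall x : A, is_open (fun x' => x' = x)).
  { intros x x' ->. destruct (HA x) as [e [He H]]. exists e. auto. }
  split.
  - intros x U _ HU. exists (fun x' => x' = x). split; [apply open_point|].
    split; [reflexivity|]. intros x' ->. exact HU.
  - intros x U _ HU. exists (fun x' => x' = x). split; [apply open_point|].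
    split; [reflexivity|]. intros x' ->. exact HU.
Qed.

Lemma continuous_svm_graph (A B : MetricSpace) (f : A -> B) (F : A -> B -> Prop) :
  (forall U, is_open U -> is_open (fun x => U (f x))) ->
  (forall a b, F a b <-> f a = b) -> continuous_svm F.
Proof.
  intros Hf HF. split.
  - intros x U HU Ux. exists (fun x' => U (f x')). split; [now apply Hf|].
    split; [apply Ux, HF; reflexivity|]. intros x' Ux' y Hy. apply HF in Hy. now subst.
  - intros x U HU [y [Hy Uy]]. apply HF in Hy. subst y.
    exists (fun x' => U (f x')). split; [now apply Hf|]. split; [assumption|].
    intros x' Ux'. exists (f x'). split; [now apply HF | assumption].
Qed.

Section Scaling.

Variable l : R.

Lemma scale_posE (hl : 0 < l) (X : MetricSpace) : exists h, scale l X = scale_pos l h X.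
Proof. unfold scale. destruct (Rlt_dec 0 l); [eauto | lra]. Qed.

Lemma diam_scale_pos (hl : 0 < l) (X : MetricSpace) :
  diam (scale_pos l hl X) = Rbar_mult l (diam X).
Proof.
  rewrite (Rbar_mult_posE _ hl). apply is_lub_Rbar_unique.
  eapply is_lub_Rbar_eqset; [|apply is_lub_Rbar_scal, Lub_Rbar_correct].
  intros r. split.
  - intros [x [y ->]]. simpl. exists (Defs.dist (m := X) x y).
    split; [exists x, y; reflexivity | ring].
  - intros [s [[x [y ->]] ->]]. exists x, y. simpl. ring.
Qed.

Lemma dis_scale_pos (hl hl' : 0 < l) (X Y : MetricSpace) (R : X -> Y -> Prop) :
  dis (X := scale_pos l hl X) (Y := scale_pos l hl' Y) R
  = Rbar_mult_pos (dis R) (mkposreal l hl).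
Proof.
  assert (scal_abs : forall a b, Rabs (l * a - l * b) = Rabs (a - b) * l).
  { intros a b. replace (l * a - l * b) with ((a - b) * l) by ring.
    rewrite Rabs_mult, (Rabs_pos_eq l); lra. }
  apply is_lub_Rbar_unique.
  eapply is_lub_Rbar_eqset; [|apply is_lub_Rbar_scal, Lub_Rbar_correct].
  intros r. split.
  - intros (x & x' & y & y' & H1 & H2 & ->). simpl. rewrite scal_abs.
    exists (Rabs (Defs.dist (m := X) x x' - Defs.dist (m := Y) y y')).
    split; [exists x, x', y, y'; auto | reflexivity].
  - intros [s [(x & x' & y & y' & H1 & H2 & ->) ->]].
    exists x, x', y, y'. simpl. rewrite scal_abs. auto.
Qed.

Lemma is_open_scale_pos (h : 0 < l) (X : MetricSpace) (U : X -> Prop) :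
  is_open (X := scale_pos l h X) U <-> is_open U.
Proof.
  split; intros H x Ux; destruct (H x Ux) as [e [He HU]].
  - exists (e / l). split; [apply Rdiv_lt_0_compat; lra|]. intros y Hy. apply HU. simpl.
    apply (Rmult_lt_compat_l l) in Hy; [|lra]. field_simplify in Hy; lra.
  - exists (e * l). split; [nra|]. intros y Hy. apply HU. simpl in Hy.
    apply (Rmult_lt_reg_l l); lra.
Qed.

Lemma semicont_scale_pos (X Y : MetricSpace) (hX hY : 0 < l) (F : X -> Y -> Prop) :
  (upper_semicont (A := scale_pos l hX X) (B := scale_pos l hY Y) F <-> upper_semicont F)
  /\ (lower_semicont (A := scale_pos l hX X) (B := scale_pos l hY Y) F <-> lower_semicont F).
Proof.
  pose proof (is_open_scale_pos hX X) as openX. pose proof (is_open_scale_pos hY Y) as openY.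
  split; split; intros H x U HU Hx; destruct (H x U) as [V [HV rest]];
    solve [apply openY; exact HU | exact Hx
          | exists V; split; [apply openX; exact HV | exact rest]].
Qed.

Lemma admissible_scale_pos k (X Y : MetricSpace) (hX hY : 0 < l) (R : X -> Y -> Prop) :
  admissible k (X := scale_pos l hX X) (Y := scale_pos l hY Y) R <-> admissible k R.
Proof.
  destruct (semicont_scale_pos X Y hX hY R), (semicont_scale_pos Y X hY hX (rel_inv R)).
  unfold admissible, continuous_svm. destruct k; tauto.
Qed.

End Scaling.

Lemma continuous_svm_scale_pos_id (X : MetricSpace) (a b : R) (ha : 0 < a) (hb : 0 < b)
  (F : X -> X -> Prop) : (forall x y, F x y <-> x = y) ->
  continuous_svm (A := scale_pos a ha X) (B := scale_pos b hb X) F.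
Proof.
  apply (continuous_svm_graph (scale_pos a ha X) (scale_pos b hb X) (fun x => x)).
  intros U HU. apply (is_open_scale_pos a ha), (is_open_scale_pos b hb), HU.
Qed.

Lemma admissible_scale_pos_id k (X : MetricSpace) (a b : R) (ha : 0 < a) (hb : 0 < b) :
  admissible k (X := scale_pos a ha X) (Y := scale_pos b hb X) (fun x y => x = y).
Proof.
  apply admissible_of_continuous; [split; eauto | |];
    apply continuous_svm_scale_pos_id; intros u v; unfold rel_inv; split; intros ->; reflexivity.
Qed.

Lemma dis_scale_pos_id (X : MetricSpace) (a b D : R) (ha : 0 < a) (hb : 0 < b) :
  diam X = Finite D ->
  Rbar_le (dis (X := scale_pos a ha X) (Y := scale_pos b hb X) (fun x y => x = y))
          (Rabs (a - b) * D).
Proof.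
  intros HD. apply dis_le. intros x x' y y' <- <-. simpl.
  pose proof (diam_ge_dist X x x') as H. rewrite HD in H. simpl in H.
  pose proof (dist_ge_0 X x x').
  set (d := Defs.dist (m := X) x x') in *.
  replace (a * d - b * d) with ((a - b) * d) by ring.
  rewrite Rabs_mult, (Rabs_pos_eq d) by assumption.
  apply Rmult_le_compat_l; [apply Rabs_pos | assumption].
Qed.

Lemma scale_0 (X : MetricSpace) : scale 0 X = Delta1.
Proof.
  unfold scale. destruct (Rlt_dec 0 0) as [h|]; [exfalso; exact (Rlt_irrefl 0 h) | reflexivity].
Qed.

Lemma nonempty_scale (X : MetricSpace) (l : R) : nonempty X -> nonempty (scale l X).
Proof. intros HX. unfold scale. destruct (Rlt_dec 0 l); [exact HX | now exists tt]. Qed.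

Lemma diam_scale (X : MetricSpace) (l D : R) :
  0 <= l -> diam X = Finite D -> diam (scale l X) = Finite (l * D).
Proof.
  intros hl HD. destruct (Rle_lt_or_eq_dec 0 l hl) as [lpos | <-].
  - destruct (scale_posE l lpos X) as [h ->]. now rewrite diam_scale_pos, HD.
  - now rewrite scale_0, diam_Delta1, Rmult_0_l.
Qed.

Definition adm_dis (k : gh_kind) (X Y : MetricSpace) (r : R) : Prop :=
  exists R : X -> Y -> Prop, admissible k R /\ dis R = Finite r.

Definition inf_dis (k : gh_kind) (X Y : MetricSpace) : Rbar := Glb_Rbar (adm_dis k X Y).

Lemma dGH_half_inf_dis (k : gh_kind) (X Y : MetricSpace) :
  dGH k X Y = Rbar_mult (/ 2) (inf_dis k X Y).
Proof. reflexivity. Qed.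

Lemma dGH_inf_dis (k : gh_kind) (X Y : MetricSpace) : Rbar_mult 2 (dGH k X Y) = inf_dis k X Y.
Proof. apply Rbar_mult_2_half. Qed.

Section InfDis.

Variable k : gh_kind.

Lemma inf_dis_le_dis (X Y : MetricSpace) (R : X -> Y -> Prop) :
  nonempty X -> admissible k R -> Rbar_le (inf_dis k X Y) (dis R).
Proof.
  intros HX HR. pose proof (dis_ge_0 X Y R (proj1 HR) HX) as H0.
  destruct (dis R) as [r| |] eqn:E; simpl in H0 |- *; try contradiction.
  - apply (proj1 (Glb_Rbar_correct _)). now exists R.
  - destruct (inf_dis k X Y); exact I.
Qed.

Lemma inf_dis_sym (X Y : MetricSpace) : inf_dis k X Y = inf_dis k Y X.
Proof.
  apply Glb_Rbar_eqset. intros r.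
  split; intros [R [HR Hr]]; exists (rel_inv R);
    rewrite dis_rel_inv; auto using admissible_rel_inv.
Qed.

Lemma diam_le_diam_plus_adm_dis (X Y : MetricSpace) (r : R) : adm_dis k X Y r ->
  Rbar_le (diam X) (Rbar_plus (diam Y) r) /\ Rbar_le (diam Y) (Rbar_plus (diam X) r).
Proof.
  intros [R [[HR _] Hr]]. split; [now apply (diam_le_diam_plus_dis X Y R)|].
  apply (diam_le_diam_plus_dis Y X (rel_inv R)); [now apply is_corr_rel_inv|].
  now rewrite dis_rel_inv.
Qed.

Lemma inf_dis_le_max_diam (X Y : MetricSpace) : nonempty X -> nonempty Y ->
  Rbar_le (inf_dis k X Y) (Rbar_max (diam X) (diam Y)).
Proof.
  intros [x0 _] [y0 _].
  eapply Rbar_le_trans; [apply (inf_dis_le_dis X Y (fun _ _ => True))|].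
  - now exists x0.
  - apply admissible_of_continuous; try apply continuous_svm_total.
    split; intros; eauto.
  - apply dis_le. intros x x' y y' _ _.
    pose proof (Rbar_le_trans _ _ _ (diam_ge_dist X x x') (Rbar_le_max_l (diam X) (diam Y))).
    pose proof (Rbar_le_trans _ _ _ (diam_ge_dist Y y y') (Rbar_le_max_r (diam X) (diam Y))).
    pose proof (dist_ge_0 X x x'). pose proof (dist_ge_0 Y y y').
    destruct (Rbar_max (diam X) (diam Y)); simpl in *; trivial.
    apply Rabs_le. lra.
Qed.

Lemma abs_diam_sub_le_inf_dis (X Y : MetricSpace) : nonempty X -> nonempty Y ->
  (diam X <> p_infty \/ diam Y <> p_infty) ->
  Rbar_le (Rbar_abs (Rbar_minus (diam X) (diam Y))) (inf_dis k X Y).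
Proof.
  intros HX HY Hfin. apply (proj2 (Glb_Rbar_correct _)). intros r Hr.
  destruct (diam_le_diam_plus_adm_dis X Y r Hr) as [C1 C2].
  pose proof (diam_ge_0 X HX). pose proof (diam_ge_0 Y HY).
  destruct (diam X) as [a| |], (diam Y) as [b| |]; simpl in *; try contradiction;
    try (destruct Hfin; congruence).
  apply Rabs_le. lra.
Qed.

Lemma inf_dis_Delta1 (X : MetricSpace) : nonempty X -> inf_dis k Delta1 X = diam X.
Proof.
  intros HX. assert (H1 : nonempty Delta1) by now exists tt.
  apply Rbar_le_antisym.
  - eapply Rbar_le_trans; [now apply inf_dis_le_max_diam|].
    rewrite diam_Delta1. unfold Rbar_max.
    destruct (Rbar_le_dec 0 (diam X)); [apply Rbar_le_refl | now apply diam_ge_0].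
  - apply (proj2 (Glb_Rbar_correct _)). intros r Hr.
    destruct (diam_le_diam_plus_adm_dis Delta1 X r Hr) as [_ H].
    rewrite diam_Delta1 in H. simpl in H. now rewrite Rplus_0_l in H.
Qed.

Lemma inf_dis_scale_pos (l : R) (hl hl' : 0 < l) (X Y : MetricSpace) :
  inf_dis k (scale_pos l hl X) (scale_pos l hl' Y)
  = Rbar_mult_pos (inf_dis k X Y) (mkposreal l hl).
Proof.
  apply is_glb_Rbar_unique.
  eapply is_glb_Rbar_eqset; [|apply is_glb_Rbar_scal, Glb_Rbar_correct].
  intros r. split.
  - intros [R [HR Hr]].
    rewrite admissible_scale_pos in HR. rewrite (dis_scale_pos l hl hl' X Y) in Hr.
    destruct (dis (X := X) (Y := Y) R) as [s| |] eqn:E; try discriminate.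
    injection Hr as <-. exists s. split; [now exists R | reflexivity].
  - intros [s [[R [HR Hs]] ->]]. exists R.
    now rewrite admissible_scale_pos, (dis_scale_pos l hl hl' X Y), Hs.
Qed.

Lemma dGH_scale_pos (l : R) (hl hl' : 0 < l) (X Y : MetricSpace) :
  dGH k (scale_pos l hl X) (scale_pos l hl' Y) = Rbar_mult l (dGH k X Y).
Proof.
  assert (hhalf : 0 < / 2) by lra.
  rewrite !dGH_half_inf_dis, inf_dis_scale_pos, !(Rbar_mult_posE _ hhalf),
    (Rbar_mult_posE _ hl).
  destruct (inf_dis k X Y); simpl; trivial. f_equal. ring.
Qed.

Lemma inf_dis_scale_scale (X : MetricSpace) (D l m : R) :
  nonempty X -> diam X = Finite D -> 0 <= l -> 0 <= m ->
  inf_dis k (scale l X) (scale m X) = Finite (Rabs (l - m) * D).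
Proof.
  intros HX HD hl hm.
  assert (D0 : 0 <= D) by (pose proof (diam_ge_0 X HX) as H; now rewrite HD in H).
  destruct (Rle_lt_or_eq_dec 0 l hl) as [lpos | <-].
  2:{ rewrite scale_0, inf_dis_Delta1, (diam_scale X m D) by auto using nonempty_scale.
      rewrite Rminus_0_l, Rabs_Ropp, Rabs_pos_eq; auto. }
  destruct (Rle_lt_or_eq_dec 0 m hm) as [mpos | <-].
  2:{ rewrite scale_0, inf_dis_sym, inf_dis_Delta1, (diam_scale X l D)
      by auto using nonempty_scale.
      rewrite Rminus_0_r, Rabs_pos_eq; auto. }
  destruct (scale_posE l lpos X) as [h1 ->], (scale_posE m mpos X) as [h2 ->].
  apply Rbar_le_antisym.
  - apply Rbar_le_trans
      with (dis (X := scale_pos l h1 X) (Y := scale_pos m h2 X) (fun x y => x = y)).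
    + apply inf_dis_le_dis; [assumption | apply admissible_scale_pos_id].
    + now apply dis_scale_pos_id.
  - pose proof (abs_diam_sub_le_inf_dis (scale_pos l h1 X) (scale_pos m h2 X) HX HX) as H.
    rewrite !diam_scale_pos, HD in H. simpl in H.
    replace (l * D + - (m * D)) with ((l - m) * D) in H by ring.
    rewrite Rabs_mult, (Rabs_pos_eq D) in H by assumption.
    apply H. left. discriminate.
Qed.

Lemma dGH_discrete (X Y : MetricSpace) :
  discrete X -> discrete Y -> dGH k X Y = dGH GH_all X Y.
Proof.
  intros DX DY. unfold dGH. f_equal. apply Glb_Rbar_eqset. intros r.
  split; intros [R [[HR _] Hr]]; exists R; split; auto.
  - now split.
  - apply admissible_of_continuous; auto using continuous_svm_discrete.
Qed.

Lemma dGH_all_le (X Y : MetricSpace) : Rbar_le (dGH GH_all X Y) (dGH k X Y).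
Proof.
  assert (hhalf : 0 < / 2) by lra.
  rewrite !dGH_half_inf_dis, !(Rbar_mult_posE _ hhalf).
  apply Rbar_mult_pos_le, (proj2 (Glb_Rbar_correct _)).
  intros r [R [[HR _] Hr]]. apply (proj1 (Glb_Rbar_correct _)). now exists R.
Qed.

End InfDis.

Theorem mainTheorem11 :
  forall (k : gh_kind) (X Y : MetricSpace), nonempty X -> nonempty Y ->
  (* (1) *)
  Rbar_mult 2 (dGH k Delta1 X) = diam X /\
  (* (2) *)
  Rbar_le (Rbar_mult 2 (dGH k X Y)) (Rbar_max (diam X) (diam Y)) /\
  (* (3) *)
  ((diam X <> p_infty \/ diam Y <> p_infty) ->
     Rbar_le (Rbar_abs (Rbar_minus (diam X) (diam Y))) (Rbar_mult 2 (dGH k X Y))) /\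
  (* (4) *)
  (diam X <> p_infty -> forall l m : R, 0 <= l -> 0 <= m ->
     Rbar_mult 2 (dGH k (scale l X) (scale m X)) = Rbar_mult (Rabs (l - m)) (diam X)) /\
  (* (5) *)
  (forall l : R, 0 < l -> dGH k (scale l X) (scale l Y) = Rbar_mult l (dGH k X Y)) /\
  (diam X <> p_infty -> diam Y <> p_infty ->
     dGH k (scale 0 X) (scale 0 Y) = Rbar_mult 0 (dGH k X Y)) /\
  (* (6) *)
  (discrete X -> discrete Y -> dGH k X Y = dGH GH_all X Y) /\
  (* (7) *)
  (forall Xs : nat -> MetricSpace,
     Rbar_to0 (fun n => dGH k (Xs n) X) -> Rbar_to0 (fun n => dGH GH_all (Xs n) X)).
Proof.
  intros k X Y HX HY. rewrite !dGH_inf_dis.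
  repeat split; auto using inf_dis_Delta1, inf_dis_le_max_diam, abs_diam_sub_le_inf_dis,
    dGH_discrete.
  - intros Hfin l m hl hm. rewrite dGH_inf_dis.
    destruct (diam X) as [D| |] eqn:HD; [|congruence|].
    + now apply inf_dis_scale_scale.
    + pose proof (diam_ge_0 X HX) as H. now rewrite HD in H.
  - intros l hl.
    destruct (scale_posE l hl X) as [h1 ->], (scale_posE l hl Y) as [h2 ->].
    apply dGH_scale_pos.
  - intros _ _. rewrite !scale_0, Rbar_mult_0_l, dGH_half_inf_dis.
    rewrite inf_dis_Delta1, diam_Delta1 by now exists tt. simpl. f_equal. ring.
  - intros Xs H e he. destruct (H e he) as [N HN]. exists N. intros n Hn.
    eapply Rbar_le_lt_trans; [apply dGH_all_le | auto].
Qed.
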